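(* Let $\varphi:[0,1]\to[0,\infty)$ be a decreasing function with $\varphi(t)>0$ for $0\le t<1$ and $\lim_{r\to1^-}\varphi(r)=0$. Then there exists a radial weight $\omega=\omega_\varphi$ such that $\widetilde{\omega}\notin\widehat{\mathcal{D}}$ but $A^p\subset A^p_\omega\subset A^p_\varphi$ for all $0<p<\infty$. Moreover, if $\varphi$ is differentiable and satisfies $-\varphi'(t)/\varphi(t)\le C/(1-t)$ for some constant $C>0$ and all $0\le t<1$, then $\varphi$ is a regular weight.
   Context: $\mathbb{D}$ is the unit disc, $\mathcal{H}(\mathbb{D})$ the analytic functions on $\mathbb{D}$, $dA=\frac{dx\,dy}{\pi}$. A radial weight is a non-negative $\omega\in L^1([0,1))$, extended by $\omega(z)=\omega(|z|)$, with $\widehat{\omega}(r)=\int_r^1\omega(s)\,ds>0$ for all $0\le r<1$. For $0<p<\infty$, $A^p_\omega$ is the space of $f\in\mathcal{H}(\mathbb{D})$ with $\int_{\mathbb{D}}|f|^p\omega\,dA<\infty$; $A^p$ denotes $A^p_\omega$ with $\omega\equiv1$. $\widetilde{\omega}(r)=\frac{\widehat{\omega}(r)}{1-r}$. A radial weight $\nu$ belongs to $\widehat{\mathcal{D}}$ if $\nu$ is integrable on $[0,1)$ and there is $C\ge1$ with $\widehat{\nu}(r)\le C\,\widehat{\nu}\big(\frac{1+r}{2}\big)$ for all $0\le r<1$ (so $\widetilde\omega\notin\widehat{\mathcal D}$ means either $\widetilde\omega$ is not integrable or this doubling condition fails). A radial weight $\omega$ is regular if $\omega(r)\asymp\frac{\widehat{\omega}(r)}{1-r}$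 for all $0\le r<1$. *)

From HB Require Import structures.
From mathcomp Require Import all_boot all_order all_algebra.
From mathcomp Require Import all_classical all_reals all_analysis.
From mathcomp Require Import complex.
Import Order.TTheory GRing.Theory Num.Theory.
Import numFieldNormedType.Exports.

Set Implicit Arguments.
Unset Strict Implicit.
Unset Printing Implicit Defensive.

Local Open Scope ring_scope.
Local Open Scope classical_set_scope.

Section Defs.
Variable R : realType.

(* the complex plane, with its normed-space structure over itself *)
Definition Cplx := (R[i])^o.

Definition cmod (w : Cplx) : R := complex.Re (`|w| : R[i]).

Definition analytic_on_disc (f : Cplx -> Cplx) : Prop :=
  forall z : Cplx, cmod z < 1 -> derivable f z 1.

Definition hatw (w : R -> R) (r : R) : \bar R :=
  \int[lebesgue_measure]_(s in `[r, 1%R[) (w s)%:E.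

Definition tildew (w : R -> R) (r : R) : R := fine (hatw w r) / (1 - r).

Definition radial_weight (w : R -> R) : Prop :=
  [/\ forall r, 0 <= r < 1 -> 0 <= w r,
      lebesgue_measure.-integrable `[0, 1[ (EFin \o w)
    & forall r, 0 <= r < 1 -> (0 < hatw w r)%E].

Definition Dhat (nu : R -> R) : Prop :=
  lebesgue_measure.-integrable `[0, 1[ (EFin \o nu) /\
  exists C : R, 1 <= C /\
    forall r, 0 <= r < 1 -> (hatw nu r <= C%:E * hatw nu ((1 + r) / 2))%E.

Definition regular_weight (w : R -> R) : Prop :=
  radial_weight w /\
  exists C : R, 1 <= C /\
    forall r, 0 <= r < 1 -> tildew w r / C <= w r /\ w r <= C * tildew w r.

(* the unit disc, as a subset of R x R (z = x + i y) *)
Definition disc : set (R * R) := [set xy | xy.1 ^+ 2 + xy.2 ^+ 2 < 1].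

(* weighted Bergman space A^p_w: analytic f on D with
   \int_D |f|^p w dA < oo, where dA = dx dy / pi and w(z) = w(|z|) *)
Definition Apw (p : R) (w : R -> R) (f : Cplx -> Cplx) : Prop :=
  analytic_on_disc f /\
  (\int[(lebesgue_measure \x lebesgue_measure)%E]_(xy in disc)
     ((cmod (f (Complex xy.1 xy.2 : R[i])) `^ p
       * w (Num.sqrt (xy.1 ^+ 2 + xy.2 ^+ 2)) / pi)%:E) < +oo)%E.

Definition Ap (p : R) (f : Cplx -> Cplx) : Prop := Apw p (fun _ => 1) f.

End Defs.

From HB Require Import structures.
From mathcomp Require Import all_boot all_order all_algebra.
From mathcomp Require Import all_classical all_reals all_analysis.
From mathcomp Require Import complex measurable_realfun.
From mathcomp Require Import ring lra.
Import Order.TTheory GRing.Theory Num.Theory.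
Import numFieldNormedType.Exports.

Set Implicit Arguments.
Unset Strict Implicit.
Unset Printing Implicit Defensive.

Local Open Scope ring_scope.
Local Open Scope classical_set_scope.

(* Sample [phi] at the dyadic points [1 - 2^-n] and let [omega] be the step
   function equal, on [[1 - 2^-n, 1 - 2^-(n+1))], to a "staircase" level
   [b_n >= phi (1 - 2^-n)], nonincreasing in [n] and bounded by [phi 0]; then
   [phi <= omega <= phi 0], which gives both inclusions of Bergman spaces.
   The staircase drops, to [phi (1 - 2^-n)], only when this value is below the
   current level by the factor [j + 2], where [j] counts the earlier drops;
   since [phi] tends to 0 there are infinitely many drops.  Right after a
   drop, the average [tildew omega] is at least [b_n / 4] on the first quarter
   of the dyadic interval but at most [b_(n+1)] beyond its midpoint, so the
   doubling ratio of [hatw (tildew omega)] there is at least [(j + 2) / 8],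
   which is unbounded.
   For the second claim, the bound on [- phi' / phi] and the mean value
   theorem give [phi (r + (1 - r) / (2 C + 2)) >= phi r / (C + 1)], hence
   [tildew phi r] is comparable to [phi r]. *)

Section ge0_integral_monotone.
Local Open Scope ereal_scope.
Context d (T : measurableType d) (R : realType).
Variable mu : {measure set T -> \bar R}.
Import HBNNSimple.

(* [ge0_le_integral] and [ge0_integralZl] without measurability assumptions
   (both sides are suprema over simple functions): the Bergman integrands of
   [Apw] are not known to be measurable. *)
Lemma ge0_le_integral_nomeas (D : set T) (f g : T -> \bar R) :
  (forall x, D x -> 0 <= f x) -> (forall x, D x -> f x <= g x) ->
  \int[mu]_(x in D) f x <= \int[mu]_(x in D) g x.
Proof.
move=> f0 fg.
have g0 x : D x -> 0 <= g x by move=> Dx; exact: le_trans (f0 _ Dx) (fg _ Dx).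
rewrite (ge0_integralE mu f0) (ge0_integralE mu g0).
apply: ge_ereal_sup => _ [h hh <-]; apply: ereal_sup_ubound; exists h => //= x.
apply: le_trans (hh x) _; rewrite /patch; case: ifP => // /set_mem Dx; exact: fg.
Qed.

Lemma ge0_integralZl_le_nomeas (D : set T) (f : T -> \bar R) (k : R) :
  (0 < k)%R -> (forall x, D x -> 0 <= f x) ->
  \int[mu]_(x in D) (k%:E * f x) <= k%:E * \int[mu]_(x in D) f x.
Proof.
move=> k0 f0.
have kf0 x : D x -> 0 <= k%:E * f x.
  by move=> Dx; apply: mule_ge0; [rewrite lee_fin ltW | exact: f0].
rewrite (ge0_integralE mu f0) (ge0_integralE mu kf0).
apply: ge_ereal_sup => _ [h hh <-].
have ki0 : (0 <= k^-1)%R by rewrite invr_ge0 ltW.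
pose h' := scale_nnsfun h ki0.
have -> : sintegral mu h = k%:E * sintegral mu h'.
  rewrite -sintegralrM; apply: eq_sintegral => x /=.
  by rewrite mulrA mulfV ?gt_eqF // mul1r.
apply: lee_wpmul2l; first by rewrite lee_fin ltW.
apply: ereal_sup_ubound; exists h' => //= x.
have := hh x; rewrite /patch; case: ifP => _; last first.
  move=> hx0; have hx : h x = 0%R.
    by apply/eqP; rewrite eq_le -lee_fin hx0 /= fun_ge0.
  by rewrite hx mulr0.
move=> hx; rewrite -(@lee_pmul2l _ k%:E) ?lte_fin // -EFinM mulrA.
by rewrite mulfV ?gt_eqF // mul1r.
Qed.

End ge0_integral_monotone.

Lemma Apw_le_weight (R : realType) (p K : R) (w1 w2 : R -> R) (f : Cplx R -> Cplx R) :
  0 < K -> (forall t, 0 <= t < 1 -> [/\ 0 <= w1 t, 0 <= w2 t & w1 t <= K * w2 t]) ->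
  Apw p w2 f -> Apw p w1 f.
Proof.
move=> K0 hw [af hf]; split => //; move: hf.
set F := fun (w : R -> R) (xy : R * R) => ((cmod (f (Complex xy.1 xy.2 : R[i])) `^ p
  * w (Num.sqrt (xy.1 ^+ 2 + xy.2 ^+ 2)) / pi)%:E).
rewrite -/(F w2) -/(F w1) => hf.
have hw_disc xy : disc xy ->
    [/\ 0 <= w1 (Num.sqrt (xy.1 ^+ 2 + xy.2 ^+ 2)),
        0 <= w2 (Num.sqrt (xy.1 ^+ 2 + xy.2 ^+ 2)) &
        w1 (Num.sqrt (xy.1 ^+ 2 + xy.2 ^+ 2)) <= K * w2 (Num.sqrt (xy.1 ^+ 2 + xy.2 ^+ 2))].
  by rewrite /disc /= => xy1; apply: hw; rewrite sqrtr_ge0 /= -sqrtr1 ltr_sqrt.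
have ipi : 0 <= (pi : R)^-1 by rewrite invr_ge0 ltW ?pi_gt0.
have F0 w xy : 0 <= w (Num.sqrt (xy.1 ^+ 2 + xy.2 ^+ 2)) -> (0 <= F w xy)%E.
  by move=> w0; rewrite lee_fin !mulr_ge0 ?powR_ge0.
have F12 xy : disc xy -> (F w1 xy <= K%:E * F w2 xy)%E.
  move=> /hw_disc [_ _ le12]; rewrite -EFinM lee_fin /F /=.
  by rewrite !mulrA [K * _]mulrC -[_ * K * _]mulrA ler_wpM2r // ler_wpM2l ?powR_ge0.
have F10 xy : disc xy -> (0 <= F w1 xy)%E by move=> /hw_disc [? _ _]; exact: F0.
have F20 xy : disc xy -> (0 <= F w2 xy)%E by move=> /hw_disc [_ ? _]; exact: F0.
set mu := (lebesgue_measure \x lebesgue_measure)%E in hf *.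
apply: le_lt_trans (ge0_le_integral_nomeas mu F10 F12) _.
apply: le_lt_trans (ge0_integralZl_le_nomeas mu K0 F20) _.
have := integral_ge0 mu F20.
by move: hf; case: (X in (X < +oo)%E) => [r| |] //= _ _; rewrite -EFinM ltry.
Qed.

Section radial_weights.
Variable R : realType.
Local Notation mu := (@lebesgue_measure R).
Implicit Types (g : R -> R) (a b s t c : R).

Lemma measurable_fun_nonincr_itv g a b (D : set R) : measurable D ->
  D `<=` `[a, b] -> {in `[a, b] &, {homo g : x y / x <= y >-> y <= x}} ->
  measurable_fun D g.
Proof.
move=> mD Dab g_ni.
have [ab|ba] := leP a b; last first.
  suff -> : D = set0 by exact: measurable_fun_set0.
  by apply/seteqP; split => // x /Dab /=; rewrite in_itv /= => /andP[]; lra.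
pose clamp x := Num.max a (Num.min x b).
have clamp_in x : clamp x \in `[a, b].
  rewrite /clamp inE /= in_itv /=; apply/andP; split.
    by rewrite le_max lexx.
  by rewrite ge_max ab ge_min lexx orbT.
apply: (@eq_measurable_fun _ _ _ _ _ (g \o clamp)).
  move=> x /[!inE] /Dab /=; rewrite in_itv /= => /andP[ax xb].
  by rewrite /clamp /= min_l // max_r.
apply: nonincreasing_measurable => // x y xy; apply: g_ni; rewrite ?clamp_in //.
by rewrite /clamp ge_max le_max lexx /= le_max le_min !ge_min xy lexx !orbT.
Qed.

Lemma measurable_fun_nonincr01 g s :
  {in `[0, 1] &, {homo g : x y / x <= y >-> y <= x}} -> 0 <= s ->
  measurable_fun `[s, 1[ g.
Proof.
move=> g_ni s0; apply: (measurable_fun_nonincr_itv _ _ g_ni) => // u /=.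
by rewrite !in_itv /= => /andP[su u1]; rewrite (le_trans s0 su) ltW.
Qed.

Lemma hatw_le g s c : s < 1 -> measurable_fun `[s, 1[ g ->
  (forall u, s <= u < 1 -> 0 <= g u <= c) ->
  (0 <= hatw g s /\ hatw g s <= (c * (1 - s))%:E)%E.
Proof.
move=> s1 mg gb; split.
  by apply: integral_ge0 => u /= /[!in_itv] /= /gb /andP[]; rewrite lee_fin.
have -> : ((c * (1 - s))%:E = \int[mu]_(u in `[s, 1%R[) (cst c%:E) u)%E.
  by rewrite integral_cst //= lebesgue_measure_itv /= lte_fin s1 -EFinD EFinM.
apply: ge0_le_integral => //; try exact/measurable_EFinP.
all: by move=> u /= /[!in_itv] /= /gb /andP[]; rewrite !lee_fin.
Qed.

Lemma hatw_ge g s t c : s <= t -> t < 1 -> measurable_fun `[s, 1[ g ->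
  (forall u, s <= u < 1 -> 0 <= g u) -> 0 <= c ->
  (forall u, s <= u < t -> c <= g u) -> ((c * (t - s))%:E <= hatw g s)%E.
Proof.
move=> st t1 mg g0 c0 gc.
have sub : `[s, t[ `<=` `[s, 1%R[.
  by move=> u /=; rewrite !in_itv /= => /andP[-> ut]; exact: lt_trans ut t1.
apply: (@le_trans _ _ (\int[mu]_(u in `[s, t[) (g u)%:E))%E; last first.
  by apply: ge0_subset_integral => //; exact/measurable_EFinP.
have -> : ((c * (t - s))%:E = \int[mu]_(u in `[s, t[) (cst c%:E) u)%E.
  rewrite integral_cst //= lebesgue_measure_itv /= lte_fin.
  have [_|ts] := ltP s t; first by rewrite -EFinD EFinM.
  have -> : t = s by apply/eqP; rewrite eq_le ts st.
  by rewrite subrr mulr0 mule0.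
apply: ge0_le_integral => //.
by apply/measurable_EFinP; exact: measurable_funS mg.
Qed.

Lemma tildew_le g s c : s < 1 -> measurable_fun `[s, 1[ g ->
  (forall u, s <= u < 1 -> 0 <= g u <= c) -> 0 <= tildew g s <= c.
Proof.
move=> s1 mg gb; have [h0 hc] := hatw_le s1 mg gb.
have s1' : 0 < 1 - s by rewrite subr_gt0.
move: h0 hc; rewrite /tildew; case: (hatw g s) => [x| |] //=.
rewrite !lee_fin => x0 xc; apply/andP; split; first by rewrite divr_ge0 // ltW.
by rewrite ler_pdivrMr.
Qed.

Lemma tildew_ge g s t c c' : s <= t -> t < 1 -> measurable_fun `[s, 1[ g ->
  (forall u, s <= u < 1 -> 0 <= g u <= c) -> 0 <= c' ->
  (forall u, s <= u < t -> c' <= g u) -> c' * (t - s) / (1 - s) <= tildew g s.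
Proof.
move=> st t1 mg gb c'0 gc'.
have s1 : s < 1 by exact: le_lt_trans st t1.
have [_ hc] := hatw_le s1 mg gb.
have hc' := hatw_ge st t1 mg (fun u hu => proj1 (andP (gb u hu))) c'0 gc'.
rewrite /tildew ler_pM2r ?invr_gt0 ?subr_gt0 //.
by move: hc hc'; case: (hatw g s) => //= x; rewrite !lee_fin.
Qed.

Lemma radial_weight_nonincr g :
  {in `[0, 1] &, {homo g : x y / x <= y >-> y <= x}} ->
  (forall t, 0 <= t < 1 -> 0 < g t) -> radial_weight g.
Proof.
move=> g_ni g_gt0.
have g_le u v : 0 <= u -> u <= v -> v < 1 -> g v <= g u.
  move=> u0 uv v1.
  by apply: g_ni => //; apply/mem_set; rewrite /= in_itv /=; apply/andP; split; lra.
have g_bnd u : 0 <= u < 1 -> 0 <= g u <= g 0.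
  by move=> /andP[u0 u1]; rewrite ltW ?g_gt0 ?u0 //= g_le.
have mg s : 0 <= s -> measurable_fun `[s, 1[ g := measurable_fun_nonincr01 g_ni.
split.
- by move=> r /g_bnd /andP[].
- apply/integrableP; split; first by apply/measurable_EFinP; exact: mg.
  have -> : (\int[mu]_(x in `[0%R, 1%R[) `|(EFin \o g) x| = hatw g 0)%E.
    by apply: eq_integral => x /[!inE] /= /[!in_itv] /= /g_bnd /andP[g0 _]; rewrite ger0_norm.
  have [_ h] := hatw_le ltr01 (mg _ (lexx 0)) g_bnd.
  exact: le_lt_trans h (ltry _).
- move=> r /andP[r0 r1]; set t := (1 + r) / 2.
  have rt : r <= t by rewrite /t; lra.
  have t1 : t < 1 by rewrite /t; lra.
  have gt0 : 0 < g t by apply: g_gt0; rewrite /t; apply/andP; split; lra.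
  apply: lt_le_trans (hatw_ge rt t1 (mg _ r0) _ (ltW gt0) _).
  + by rewrite lte_fin mulr_gt0 // subr_gt0 /t; lra.
  + by move=> u /andP[ru u1]; rewrite ltW // g_gt0 // (le_trans r0 ru).
  + by move=> u /andP[ru ut]; rewrite g_le ?(le_trans r0 ru) ?ltW.
Qed.

End radial_weights.

Section dyadic_partition.
Variable R : realType.

Definition dyad (n : nat) : R := 2^-1 ^+ n.

Let half_ge0 : 0 <= 2^-1 :> R. Proof. by rewrite invr_ge0. Qed.
Let half_le1 : 2^-1 <= 1 :> R. Proof. by rewrite invf_le1 ?ler1n. Qed.

Lemma dyad_gt0 n : 0 < dyad n.
Proof. by rewrite exprn_gt0 ?invr_gt0. Qed.

Lemma dyad_le1 n : dyad n <= 1.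
Proof. exact: exprn_ile1. Qed.

Lemma dyadS n : dyad n.+1 = dyad n / 2.
Proof. exact: exprSr. Qed.

Lemma dyad_nonincr n m : (n <= m)%N -> dyad m <= dyad n.
Proof. exact: ler_wiXn2l. Qed.

Lemma dyad_cvg0 : dyad @ \oo --> 0.
Proof. by apply: cvg_expr; rewrite ger0_norm // invf_lt1 ?ltr1n. Qed.

Lemma dyad_lt eps : 0 < eps -> exists n, dyad n < eps.
Proof.
move=> eps0; have [N _ hN] := cvgr_lt _ dyad_cvg0 _ eps0.
by exists N; apply: hN => /=.
Qed.

Lemma dyadic_point01 n : 0 <= 1 - dyad n < 1.
Proof. by apply/andP; split; have := dyad_le1 n; have := dyad_gt0 n; lra. Qed.

Lemma dyadic_point_cvg : (fun n => 1 - dyad n) @ \oo --> (1 : R).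
Proof.
rewrite -[X in _ --> X]subr0; apply: cvgB; [exact: cvg_cst | exact: dyad_cvg0].
Qed.

(* [0] outside [[0, 1)]. *)
Definition dyadic_index (s : R) : nat :=
  xget 0%N [set n | 1 - dyad n <= s < 1 - dyad n.+1].

Lemma dyadic_index_exists s : 0 <= s < 1 ->
  exists n, 1 - dyad n <= s < 1 - dyad n.+1.
Proof.
case/andP=> s0 s1.
have small : exists m, dyad m < 1 - s by apply: dyad_lt; rewrite subr_gt0.
case: (ex_minnP small) => -[|n] hn n_min.
  by move: hn; rewrite /dyad expr0; lra.
exists n; have : ~~ (dyad n < 1 - s) by apply/negP => /n_min; rewrite ltnn.
by rewrite -leNgt => hn'; apply/andP; split; lra.
Qed.

Lemma dyadic_indexP s : 0 <= s < 1 ->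
  1 - dyad (dyadic_index s) <= s < 1 - dyad (dyadic_index s).+1.
Proof.
move=> s01; rewrite /dyadic_index; case: xgetP => // hnone.
by have [n hn] := dyadic_index_exists s01; have := hnone n.
Qed.

Lemma dyadic_index_eq n s : 1 - dyad n <= s < 1 - dyad n.+1 ->
  dyadic_index s = n.
Proof.
move=> /andP[h1 h2].
have s01 : 0 <= s < 1.
  by apply/andP; split; have := dyad_le1 n; have := dyad_gt0 n.+1; lra.
have /andP[m1 m2] := dyadic_indexP s01.
apply/eqP; rewrite eqn_leq.
by apply/andP; split; rewrite leqNgt; apply/negP => /dyad_nonincr; lra.
Qed.

Lemma le_dyadic_index s t : 0 <= s -> s <= t -> t < 1 ->
  (dyadic_index s <= dyadic_index t)%N.
Proof.
move=> s0 st t1.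
have /dyadic_indexP /andP[hs1 hs2] : 0 <= s < 1 by rewrite s0 (le_lt_trans st t1).
have /dyadic_indexP /andP[ht1 ht2] : 0 <= t < 1 by rewrite (le_trans s0 st) t1.
by rewrite leqNgt; apply/negP => /dyad_nonincr; lra.
Qed.

End dyadic_partition.

Section staircase.
Variable R : realType.
Variable a : nat -> R.
Hypothesis a_gt0 : forall n, 0 < a n.
Hypothesis a_nonincr : forall n m, (n <= m)%N -> a m <= a n.

Fixpoint staircase (n : nat) : R * nat :=
  if n is n'.+1 then
    let p := staircase n' in
    if a n * (p.2.+2)%:R <= p.1 then (a n, p.2.+1) else p
  else (a 0, 0%N).

Definition level n := (staircase n).1.
Definition drops n := (staircase n).2.

Lemma level_drop n : a n.+1 * (drops n).+2%:R <= level n ->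
  level n.+1 = a n.+1 /\ drops n.+1 = (drops n).+1.
Proof. by rewrite /level /drops /= => ->. Qed.

Lemma level_nodrop n : ~~ (a n.+1 * (drops n).+2%:R <= level n) ->
  staircase n.+1 = staircase n.
Proof. by rewrite /level /drops /= => /negbTE ->. Qed.

Lemma a_le_level n : a n <= level n.
Proof.
elim: n => [|n IH] //; rewrite /level /=.
by case: ifP => _ //=; apply: le_trans IH; exact: a_nonincr.
Qed.

Lemma level_gt0 n : 0 < level n.
Proof. exact: lt_le_trans (a_gt0 n) (a_le_level n). Qed.

Lemma level_nonincr n m : (n <= m)%N -> level m <= level n.
Proof.
elim: m => [|m IH]; first by rewrite leqn0 => /eqP->.
rewrite leq_eqVlt => /orP[/eqP->//|]; rewrite ltnS => /IH; apply: le_trans.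
rewrite /level /=; case: ifP => //= le_m; apply: le_trans le_m.
by rewrite ler_peMr ?ler1n // ltW.
Qed.

Lemma drops_nondecr n m : (n <= m)%N -> (drops n <= drops m)%N.
Proof.
elim: m => [|m IH]; first by rewrite leqn0 => /eqP->.
rewrite leq_eqVlt => /orP[/eqP->//|]; rewrite ltnS => /IH /leq_trans; apply.
by rewrite /drops /=; case: ifP => //= _; exact: leqnSn.
Qed.

(* Extended outside [[0, 1)] so as to be nonincreasing on the whole line. *)
Definition staircase_weight (s : R) : R :=
  if s < 0 then level 0 else if s < 1 then level (dyadic_index s) else 0.

Local Notation w := staircase_weight.

Lemma staircase_weightE s : 0 <= s < 1 -> w s = level (dyadic_index s).
Proof. by case/andP => s0 s1; rewrite /w ltNge s0 /= s1. Qed.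

Lemma staircase_weight_ge0 s : 0 <= w s.
Proof. by rewrite /w; case: ifP => _; [|case: ifP => _ //]; exact/ltW/level_gt0. Qed.

Lemma staircase_weight_le s : w s <= level 0.
Proof.
rewrite /w; case: ifP => _ //; case: ifP => _; first exact: level_nonincr.
exact/ltW/level_gt0.
Qed.

Lemma staircase_weight_nonincr : {homo w : x y / x <= y >-> y <= x}.
Proof.
move=> s t st; have [s0|s0] := ltP s 0; first by rewrite {2}/w s0 staircase_weight_le.
have [t1|t1] := ltP t 1; last first.
  by rewrite {1}/w ltNge (le_trans s0 st) /= ltNge t1 staircase_weight_ge0.
rewrite !staircase_weightE ?s0 ?(le_trans s0 st) ?(le_lt_trans st t1) ?t1 //.
exact/level_nonincr/le_dyadic_index.
Qed.

Lemma measurable_staircase_weight (D : set R) : measurable D -> measurable_fun D w.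
Proof. by move=> mD; apply: nonincreasing_measurable => //; exact: staircase_weight_nonincr. Qed.

Lemma staircase_weight_dyadic n u : 1 - dyad R n <= u < 1 - dyad R n.+1 ->
  w u = level n.
Proof.
move=> hu; rewrite staircase_weightE ?(dyadic_index_eq hu) //.
by case/andP: hu; have := dyad_le1 R n; have := dyad_gt0 R n.+1; lra.
Qed.

Lemma staircase_weight_tail n u : 1 - dyad R n <= u < 1 -> w u <= level n.
Proof.
case/andP=> nu u1; have u0 : 0 <= u by have := dyad_le1 R n; lra.
rewrite staircase_weightE ?u0 //; apply: level_nonincr.
rewrite -(@dyadic_index_eq _ n (1 - dyad R n)) ?le_dyadic_index //.
  by have := dyad_le1 R n; lra.
by rewrite lexx /= dyadS; have := dyad_gt0 R n; lra.
Qed.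

Lemma radial_weight_staircase : radial_weight w.
Proof.
apply: radial_weight_nonincr => [s t _ _|t t01]; first exact: staircase_weight_nonincr.
by rewrite staircase_weightE // level_gt0.
Qed.

Lemma tildew_staircase_tail n u : 1 - dyad R n <= u < 1 ->
  0 <= tildew w u <= level n.
Proof.
case/andP=> nu u1; apply: tildew_le => //.
  exact: measurable_staircase_weight.
by move=> v /andP[uv v1]; rewrite staircase_weight_ge0 staircase_weight_tail // v1 (le_trans nu uv).
Qed.

Lemma tildew_staircase_head n u :
  1 - dyad R n <= u <= 1 - dyad R n + dyad R n / 4 -> level n / 4 <= tildew w u.
Proof.
case/andP=> nu u4; have e0 := dyad_gt0 R n; have e1 := dyad_le1 R n.
have xu : u <= 1 - dyad R n.+1 by rewrite dyadS; lra.
have x1 : 1 - dyad R n.+1 < 1 by have := dyad_gt0 R n.+1; lra.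
apply: le_trans (tildew_ge (c := level 0) xu x1 _ _ (ltW (level_gt0 n)) _).
- have l0 := level_gt0 n; rewrite ler_pdivlMr ?subr_gt0; last lra.
  rewrite dyadS -mulrA ler_pM2l //; lra.
- exact: measurable_staircase_weight.
- by move=> v _; rewrite staircase_weight_ge0 staircase_weight_le.
- move=> v /andP[uv vx]; rewrite (staircase_weight_dyadic (n := n)) //.
  by rewrite vx (le_trans nu uv).
Qed.

Hypothesis a_cvg0 : a @ \oo --> 0.

(* Otherwise the staircase would be constant from [n] on while [a] tends to 0. *)
Lemma exists_drop n : exists m, (n <= m)%N /\ a m.+1 * (drops m).+2%:R <= level m.
Proof.
apply: contrapT => nodrop.
have const k : staircase (n + k) = staircase n.
  elim: k => [|k IH]; first by rewrite addn0.
  rewrite addnS level_nodrop ?IH //; apply/negP => dr.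
  by apply: nodrop; exists (n + k)%N; rewrite leq_addr.
have eps_gt0 : 0 < level n / (drops n).+2%:R by rewrite divr_gt0 ?level_gt0.
have [k _ hk] := cvgr_lt _ a_cvg0 _ eps_gt0.
have := hk (n + k).+1 (leqW (leq_addl _ _)); rewrite ltr_pdivlMr ?ltr0n //.
rewrite /level /drops -(const k) => lt_drop; apply: nodrop.
by exists (n + k)%N; rewrite leq_addr ltW.
Qed.

Lemma exists_large_drop K :
  exists m, (K <= drops m)%N /\ a m.+1 * (drops m).+2%:R <= level m.
Proof.
elim: K => [|K [m [Km drop_m]]]; first by have [m [_ h]] := exists_drop 0; exists m.
have [m' [mm' drop_m']] := exists_drop m.+1.
exists m'; split => //; apply: leq_trans (drops_nondecr mm').
by rewrite (level_drop drop_m).2.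
Qed.

(* Measuring [hatw (tildew w)] at [1 - dyad m] and at the midpoint
   [1 - dyad m.+1] shows that a doubling constant [C] bounds every drop
   ratio [level m / level m.+1] by [8 C]. *)
Lemma level_le_doubling (C : R) :
  measurable_fun (`[0, 1[ : set R) (tildew w) -> 0 <= C ->
  (forall r, 0 <= r < 1 ->
     (hatw (tildew w) r <= C%:E * hatw (tildew w) ((1 + r) / 2))%E) ->
  forall m, level m <= 8 * C * level m.+1.
Proof.
move=> mnu C0 hC m.
have e0 := dyad_gt0 R m; have e1 := dyad_le1 R m; have eS := dyadS R m.
set e := dyad R m in e0 e1 eS; set r := 1 - e.
have mnu_at (s : R) : 0 <= s -> measurable_fun `[s, 1[ (tildew w).
  move=> s0; apply: measurable_funS mnu => // v /=.
  by rewrite !in_itv /= => /andP[sv ->]; rewrite (le_trans s0 sv).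
have lower : ((level m / 4 * (e / 4))%:E <= hatw (tildew w) r)%E.
  have -> : e / 4 = r + e / 4 - r by rewrite /r; ring.
  apply: hatw_ge; rewrite /r.
  - lra.
  - lra.
  - by apply: mnu_at; lra.
  - by move=> v /(@tildew_staircase_tail m) /andP[].
  - by rewrite divr_ge0 // ltW ?level_gt0.
  - by move=> v /andP[rv ve]; apply: tildew_staircase_head; rewrite rv ltW.
have upper : (hatw (tildew w) (1 - dyad R m.+1) <= (level m.+1 * dyad R m.+1)%:E)%E.
  have x1 : 1 - dyad R m.+1 < 1 by have := dyad_gt0 R m.+1; lra.
  have x0 : 0 <= 1 - dyad R m.+1 by have := dyad_le1 R m.+1; lra.
  have [_] := hatw_le x1 (mnu_at _ x0) (fun v => @tildew_staircase_tail m.+1 v).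
  by rewrite subKr.
have r01 : 0 <= r < 1 by rewrite /r; apply/andP; split; lra.
have := hC r r01; have -> : (1 + r) / 2 = 1 - dyad R m.+1 by rewrite /r eS; field.
move=> /(le_trans lower) /le_trans /(_ (lee_wpmul2l _ upper)).
rewrite lee_fin C0 -EFinM lee_fin eS => /(_ isT) ineq.
have l1 := level_gt0 m.+1; nra.
Qed.

Lemma not_Dhat_tildew_staircase : ~ Dhat (tildew w).
Proof.
move=> [/integrableP [mnu _] [C [C1 hC]]].
have {}mnu : measurable_fun (`[0, 1[ : set R) (tildew w) by apply/measurable_EFinP.
have C0 : 0 <= 8 * C by lra.
have [m [Km drop_m]] := exists_large_drop (Num.bound (8 * C)).
have big_ratio : 8 * C < (drops m).+2%:R.
  apply: lt_le_trans (archi_boundP C0) _.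
  by rewrite ler_nat (leq_trans Km) // leqW.
have := level_le_doubling mnu (ltW (lt_le_trans ltr01 C1)) hC m.
rewrite (level_drop drop_m).1 => /(le_trans drop_m).
by have := a_gt0 m.+1; nra.
Qed.

End staircase.

Section log_derivative_bound.
Variable R : realType.
Variable phi : R -> R.
Hypothesis phi_decr :
  forall s t : R, 0 <= s <= 1 -> 0 <= t <= 1 -> s <= t -> phi t <= phi s.
Hypothesis phi_gt0 : forall t : R, 0 <= t < 1 -> 0 < phi t.
Variable C : R.
Hypothesis C_gt0 : 0 < C.
Hypothesis phi_derivable : forall t : R, 0 <= t < 1 -> derivable phi t 1.
Hypothesis phi_logderiv :
  forall t : R, 0 <= t < 1 -> - derive1 phi t / phi t <= C / (1 - t).

Lemma neg_derive1_le r c : 0 <= r -> r <= c -> 2 * c <= 1 + r -> r < 1 ->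
  - derive1 phi c <= 2 * C * phi r / (1 - r).
Proof.
move=> r0 rc c_mid r1.
have c01 : 0 <= c < 1 by apply/andP; split; lra.
have q0 := phi_gt0 c01.
have qP : phi c <= phi r by apply: phi_decr => //; apply/andP; split; lra.
have := phi_logderiv c01; rewrite ler_pdivrMr // => /le_trans; apply.
have c1 : 0 < 1 - c by lra.
have -> : C / (1 - c) * phi c = C * phi c * (1 - r) / (1 - c) / (1 - r).
  by field; apply/andP; split; lra.
rewrite ler_pM2r ?invr_gt0 ?subr_gt0 // ler_pdivrMr //.
have h1 : phi c * (1 - r) <= phi c * (2 * (1 - c)).
  by apply: ler_wpM2l; [exact: ltW | lra].
have h2 : phi c * (2 * (1 - c)) <= phi r * (2 * (1 - c)).
  by apply: ler_wpM2r => //; lra.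
by have := C_gt0; nra.
Qed.

(* Mean value theorem on [[r, r + d]] with the previous bound on [- phi']. *)
Lemma phi_step_ge r : 0 <= r < 1 ->
  phi r / (C + 1) <= phi (r + (1 - r) / (2 * C + 2)).
Proof.
case/andP=> r0 r1; have C0 := C_gt0; set d := (1 - r) / (2 * C + 2).
have d0 : 0 < d by rewrite divr_gt0 //; lra.
have d_half : d <= (1 - r) / 2.
  by apply: ler_wpM2l; [lra | rewrite lef_pV2 ?posrE; lra].
have [c] : exists2 c, c \in `]r, r + d[%R &
    phi (r + d) - phi r = derive1 phi c * (r + d - r).
  apply: MVT; first lra.
  - move=> x /[!in_itv] /= /andP[h1 h2]; rewrite derive1E; apply/derivableP.
    by apply: phi_derivable; apply/andP; split; lra.
  - apply: derivable_within_continuous => x /[!in_itv] /= /andP[h1 h2].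
    by apply: phi_derivable; apply/andP; split; lra.
rewrite in_itv /= [r + d - r]addrC addKr => /andP[rc cd] mvt.
have := neg_derive1_le r0 (ltW rc) _ r1; rewrite -/d.
have P0 : 0 < phi r by apply: phi_gt0; rewrite r0.
have -> : phi r / (C + 1) = phi r - 2 * C * phi r / (1 - r) * d.
  by rewrite /d; field; lra.
move=> /(_ ltac:(lra)) /(ler_wpM2r (ltW d0)); lra.
Qed.

Lemma regular_weight_log_derivative : regular_weight phi.
Proof.
have C0 := C_gt0.
have phi_ni : {in `[0, 1] &, {homo phi : x y / x <= y >-> y <= x}}.
  by move=> x y; rewrite !inE /= !in_itv /=; exact: phi_decr.
split; first exact: radial_weight_nonincr phi_ni phi_gt0.
have K_eq : 2 * (C + 1) ^+ 2 = (C + 1) * (2 * C + 2) by ring.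
have K_ge1 : 1 <= 2 * (C + 1) ^+ 2 by rewrite K_eq; nra.
exists (2 * (C + 1) ^+ 2); split => // r /andP[r0 r1].
have P0 : 0 < phi r by apply: phi_gt0; rewrite r0.
have mphi := measurable_fun_nonincr01 phi_ni r0.
have phi_le u : r <= u < 1 -> 0 <= phi u <= phi r.
  case/andP=> ru u1; rewrite ltW ?phi_gt0 //=; last by rewrite u1 (le_trans r0 ru).
  by apply: phi_decr => //; apply/andP; split; lra.
have /andP[_ upper] := tildew_le r1 mphi phi_le.
set d := (1 - r) / (2 * C + 2).
have d0 : 0 < d by rewrite divr_gt0 //; lra.
have d_half : d <= (1 - r) / 2.
  by apply: ler_wpM2l; [lra | rewrite lef_pV2 ?posrE; lra].
have lower : phi r / ((C + 1) * (2 * C + 2)) <= tildew phi r.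
  have -> : phi r / ((C + 1) * (2 * C + 2)) = phi r / (C + 1) * (r + d - r) / (1 - r).
    by rewrite /d; field; do ?(apply/andP; split); lra.
  apply: (tildew_ge (t := r + d) _ _ mphi phi_le); [lra | lra | | ].
    by rewrite divr_ge0 ?ltW //; lra.
  move=> u /andP[ru ud]; apply: le_trans (phi_step_ge _) _; first by rewrite r0.
  by rewrite -/d; apply: phi_decr; try (apply/andP; split); lra.
split.
  rewrite ler_pdivrMr ?(lt_le_trans ltr01) //; apply: le_trans upper _.
  by rewrite ler_peMr // ltW.
by rewrite K_eq -ler_pdivrMl //; nra.
Qed.

End log_derivative_bound.

Section dyadic_samples.
Variable R : realType.
Variable g : R -> R.

Definition dyadic_samples (n : nat) : R := g (1 - dyad R n).

Lemma dyadic_samples_cvg0 : g x @[x --> 1^'-] --> 0 -> dyadic_samples @ \oo --> 0.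
Proof.
move=> /cvg_at_leftP; apply; split; last exact: dyadic_point_cvg.
by move=> n; have /andP[] := dyadic_point01 R n.
Qed.

Hypothesis g_decr :
  forall s t : R, 0 <= s <= 1 -> 0 <= t <= 1 -> s <= t -> g t <= g s.
Hypothesis g_gt0 : forall t : R, 0 <= t < 1 -> 0 < g t.

Lemma dyadic_samples_gt0 n : 0 < dyadic_samples n.
Proof. exact/g_gt0/dyadic_point01. Qed.

Lemma dyadic_samples_nonincr n m : (n <= m)%N -> dyadic_samples m <= dyadic_samples n.
Proof.
move=> nm; have /andP[n0 n1] := dyadic_point01 R n.
have /andP[m0 m1] := dyadic_point01 R m.
apply: g_decr; [by rewrite n0 ltW | by rewrite m0 ltW |].
by have := dyad_nonincr R nm; lra.
Qed.

Lemma le_staircase_weight t : 0 <= t < 1 ->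
  g t <= staircase_weight dyadic_samples t.
Proof.
move=> t01; rewrite staircase_weightE //.
apply: le_trans (a_le_level dyadic_samples_nonincr _); apply: g_decr.
- by have /andP[-> /ltW ->] := dyadic_point01 R (dyadic_index t).
- by case/andP: t01 => -> /ltW ->.
- by case/andP: (dyadic_indexP t01).
Qed.

End dyadic_samples.

Theorem theorem7 (R : realType) (phi : R -> R)
  (phi_ge0 : forall t : R, 0 <= t <= 1 -> 0 <= phi t)
  (phi_decr : forall s t : R, 0 <= s <= 1 -> 0 <= t <= 1 -> s <= t -> phi t <= phi s)
  (phi_gt0 : forall t : R, 0 <= t < 1 -> 0 < phi t)
  (phi_lim : phi x @[x --> 1^'-] --> 0) :
  (exists omega : R -> R,
      [/\ radial_weight omega,
          ~ Dhat (tildew omega)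
        & forall p : R, 0 < p ->
            (forall f, Ap p f -> Apw p omega f) /\
            (forall f, Apw p omega f -> Apw p phi f)]) /\
  (forall C : R, 0 < C ->
     (forall t : R, 0 <= t < 1 -> derivable phi t 1) ->
     (forall t : R, 0 <= t < 1 -> - derive1 phi t / phi t <= C / (1 - t)) ->
     regular_weight phi).
Proof.
split; last first.
  by move=> C C0 dphi hd; exact: (regular_weight_log_derivative phi_decr phi_gt0 C0 dphi hd).
have a_gt0 := dyadic_samples_gt0 phi_gt0.
have a_nonincr := dyadic_samples_nonincr phi_decr.
have a_cvg0 := dyadic_samples_cvg0 phi_lim.
pose omega := staircase_weight (dyadic_samples phi).
exists omega; split.
- exact: radial_weight_staircase a_gt0 a_nonincr.
- exact: not_Dhat_tildew_staircase a_gt0 a_nonincr a_cvg0.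
move=> p _; split => f.
- apply: (Apw_le_weight (level_gt0 a_gt0 a_nonincr 0)) => t _.
  by split; rewrite ?mulr1 ?staircase_weight_ge0 ?staircase_weight_le.
- apply: (Apw_le_weight ltr01) => t t01.
  split; first by case/andP: t01 => t0 t1; rewrite phi_ge0 // t0 ltW.
    exact: staircase_weight_ge0.
  by rewrite mul1r; exact: le_staircase_weight.
Qed.
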